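(* Let $A$ be a finite alphabet. If the sliding block code $\phi: A^{\mathbb{N}} \to A^{\mathbb{N}}$ is a local homeomorphism that $*$-commutes with the shift map $\sigma$, then $\phi$ is a $k$-fold covering map for some $k\in\mathbb{N}$.
   Context: $A$ is a finite set with the discrete topology; $\mathbb{N}=\{1,2,3,\dots\}$; $A^{\mathbb{N}}$ is the space of one-sided infinite sequences over $A$ with the product topology; $\sigma(x_1x_2x_3\cdots)=x_2x_3\cdots$. A sliding block code is a map $\tau_d: A^{\mathbb{N}}\to A^{\mathbb{N}}$, $\tau_d(x)_i=d(x_i\cdots x_{i+n-1})$, for some $n\in\mathbb{N}$ and function $d:A^n\to A$. A continuous map $f:X\to Y$ is a local homeomorphism if every $x\in X$ has an open neighborhood $U$ such that $f(U)$ is open in $Y$ and $f:U\to f(U)$ is a homeomorphism. Two functions $S,T: X\to X$ $*$-commute if $ST=TS$ and for every $(y,z)$ with $S(y)=T(z)$ there exists a unique $x$ with $T(x)=y$ and $S(x)=z$. For a continuous surjection $p:E\to B$, an open set $U\subseteq B$ is evenly covered if $p^{-1}(U)$ is a union of pairwise disjoint open sets $V_\alpha$ each of which $p$ maps homeomorphically onto $U$; $p$ is a covering map if every point of $B$ has an evenly covered open neighborhood, and a $k$-fold covering map if moreover $|p^{-1}(b)|=k$ for every $b\in B$. *)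

From HB Require Import structures.
From mathcomp Require Import all_boot all_order all_algebra.
From mathcomp Require Import all_classical all_reals all_analysis.
Set Implicit Arguments. Unset Strict Implicit. Unset Printing Implicit Defensive.
Local Open Scope classical_set_scope.

(* The full one-sided shift space A^N over a finite alphabet A:
   sequences indexed by nat (= {0,1,2,...}, a harmless reindexing of {1,2,...}),
   A carrying the discrete topology and A^N the product topology
   (topology of pointwise convergence). *)
Definition shift_space (A : finType) := {ptws nat -> discrete_topology A}.

Definition shift_map (A : finType) (x : shift_space A) : shift_space A :=
  fun i => x i.+1.

Definition sliding_block_code (A : finType) (phi : shift_space A -> shift_space A) :=
  exists n : nat, (0 < n)%N /\ exists d : ('I_n -> A) -> A,
    forall (x : shift_space A) (i : nat), phi x i = d (fun j : 'I_n => x (i + j)%N).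

Definition star_commute (X : Type) (S T : X -> X) :=
  (forall x, S (T x) = T (S x)) /\
  (forall y z, S y = T z -> exists! x, T x = y /\ S x = z).

Definition homeo_on (X Y : topologicalType) (f : X -> Y) (U : set X) (V : set Y) :=
  set_bij U V f /\
  exists g : Y -> X,
    (forall x, U x -> g (f x) = x) /\ (forall y, V y -> f (g y) = y) /\
    {within U, continuous f} /\ {within V, continuous g}.

Definition local_homeomorphism (X Y : topologicalType) (f : X -> Y) :=
  continuous f /\
  forall x, exists U : set X,
    [/\ open U, U x, open (f @` U) & homeo_on f U (f @` U)].

Definition evenly_covered (E B : topologicalType) (p : E -> B) (U : set B) :=
  open U /\
  exists (I : Type) (V : I -> set E),
    [/\ (forall i, open (V i)),
        (forall i j, i <> j -> V i `&` V j = set0),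
        p @^-1` U = \bigcup_(i in [set: I]) V i &
        (forall i, homeo_on p (V i) U)].

Definition covering_map (E B : topologicalType) (p : E -> B) :=
  [/\ continuous p, (forall b : B, exists e : E, p e = b) &
      forall b, exists U : set B, U b /\ evenly_covered p U].

Definition k_fold_covering (E B : topologicalType) (p : E -> B) (k : nat) :=
  covering_map p /\ forall b : B, (p @^-1` [set b] #= `I_k)%card.

(* A local homeomorphism of the compact space A^N is injective on every cylinder of some
   fixed length M (König's lemma), so each fibre is in bijection with the finite set of
   length-M prefixes of its points, and small cylinders around a point lift uniquely
   through phi. The *-commutation with the shift makes sigma a bijection from the fibre
   over b onto the fibre over sigma b, so fibre sizes are shift-invariant. Combining this
   with the lifting property, which only lets fibres grow under small perturbations of
   the base point, any b' can be reached by shifting a point near b: all fibres have the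
   same size k, and the cylinder sheets around the fibre points evenly cover a cylinder
   around b. *)

From HB Require Import structures.
From mathcomp Require Import all_boot all_order all_algebra.
From mathcomp Require Import all_classical all_reals all_analysis.
Set Implicit Arguments. Unset Strict Implicit. Unset Printing Implicit Defensive.
Local Open Scope classical_set_scope.

Lemma card_eq_set_bij (T U : Type) (B : set T) (C : set U) (f : T -> U) :
  set_bij B C f -> (B #= C)%card.
Proof.
move=> fB; have [g] : $|{bij B >-> C}| by apply/bijPex; exists f.
exact: pcard_eq g.
Qed.

Section Cylinders.
Variable A : finType.
Local Notation X := (shift_space A).

Definition agree (n : nat) (x y : X) := forall i, (i < n)%N -> x i = y i.

Lemma agree_sym n x y : agree n x y -> agree n y x.
Proof. by move=> xy i lt_in; rewrite xy. Qed.

Lemma agree_trans n x y z : agree n x y -> agree n y z -> agree n x z.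
Proof. by move=> xy yz i lt_in; rewrite xy ?yz. Qed.

Lemma agreeW m n x y : (m <= n)%N -> agree n x y -> agree m x y.
Proof. by move=> le_mn xy i lt_im; apply: xy; apply: leq_trans le_mn. Qed.

Lemma nbhs_agree (x : X) n : nbhs x (agree n x).
Proof.
elim: n => [|n IHn]; first by apply: filterS filterT => y _ i.
have coord_n : nbhs x [set y : X | y n = x n].
  have : {ptws, nbhs x --> (x : nat -> discrete_topology A)} by [].
  by move/pointwise_cvgP => /(_ n) /discrete_cvg.
apply: filterS (filterI IHn coord_n) => y [xy yn] i.
by rewrite ltnS leq_eqVlt => /orP[/eqP ->|]; [rewrite yn|exact: xy].
Qed.

(* The cylinders agree n x form a filter converging pointwise to x, hence finer than
   nbhs x. *)
Lemma nbhs_agreeP (x : X) (P : set X) : nbhs x P <-> exists n, agree n x `<=` P.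
Proof.
split=> [|[n xP]]; last exact: filterS xP (nbhs_agree x n).
pose F := filter_from [set: nat] (fun n => agree n x).
have F_filter : Filter F.
  apply: filter_from_filter; first by exists 0%N.
  move=> m n _ _; exists (maxn m n) => // y xy.
  by split; apply: agreeW xy; rewrite ?leq_maxl ?leq_maxr.
have : {ptws, F --> (x : nat -> discrete_topology A)}.
  apply/pointwise_cvgP => t; apply/discrete_cvg.
  by exists t.+1 => // y xy; rewrite xy.
by move=> /(_ P) FP /FP[n _ xP]; exists n.
Qed.

Lemma open_agreeP (U : set X) :
  open U <-> forall x, U x -> exists n, agree n x `<=` U.
Proof. by rewrite openE; split=> Uo x Ux; apply/nbhs_agreeP/Uo. Qed.

Lemma continuous_agree (f : X -> X) : continuous f ->
  forall x n, exists m, forall y, agree m x y -> agree n (f x) (f y).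
Proof. by move=> fc x n; have /nbhs_agreeP := fc x _ (nbhs_agree (f x) n). Qed.

Lemma within_continuous_agreeP (S : set X) (f : X -> X) :
  {within S, continuous f} <->
  forall x, S x -> forall n, exists m, forall y, S y -> agree m x y ->
    agree n (f x) (f y).
Proof.
rewrite subspace_continuousP; split=> [fc x Sx n|fc x Sx P /nbhs_agreeP[n fxP]].
  have /nbhs_agreeP[m xS] := fc x Sx _ (nbhs_agree (f x) n).
  by exists m => y Sy xy; apply: xS.
have [m xfx] := fc x Sx n.
by apply/nbhs_agreeP; exists m => y xy Sy; apply/fxP/xfx.
Qed.

Lemma iter_shift_map (x : X) j : iter j (@shift_map A) x = (fun i => x (i + j)%N) :> X.
Proof.
elim: j => [|j IHj] /=; first by apply: funext => i; rewrite addn0.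
by rewrite IHj; apply: funext => i; rewrite /shift_map addSnnS.
Qed.

Section PrefixCompactness.
Variable Q : X -> nat -> Prop.
Hypothesis Q_agree : forall n x y, agree n x y -> Q x n -> Q y n.
Hypothesis Q_leq : forall x m n, (m <= n)%N -> Q x n -> Q x m.
Hypothesis Q_witness : forall n, exists x, Q x n.

Definition extendable (p : X) j := forall n, exists2 w, agree j p w & Q w n.

Definition set_coord (p : X) j (a : A) : X := fun i => if i == j then a else p i.

(* A finite alphabet lets the pigeonhole principle choose the next letter. *)
Lemma extendable_step p j : extendable p j -> exists a, extendable (set_coord p j a) j.+1.
Proof.
move=> p_ext; apply: contrapT => no_letter.
have /choice[N N_bad] : forall a, exists N, forall w,
    agree j.+1 (set_coord p j a) w -> ~ Q w N.
  move=> a; apply: contrapT => a_ok; apply: no_letter; exists a => n.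
  apply: contrapT => no_w; apply: a_ok; exists n => w pw Qw; apply: no_w.
  by exists w.
have [w pw Qw] := p_ext (\max_(a : A) N a).
apply: (N_bad (w j) w); last by apply: Q_leq Qw; apply: leq_bigmax.
move=> i; rewrite ltnS leq_eqVlt /set_coord => /orP[/eqP ->|lt_ij].
  by rewrite eqxx.
by rewrite (ltn_eqF lt_ij) pw.
Qed.

Lemma prefix_compactness : exists x, forall n, Q x n.
Proof.
have [w0 _] := Q_witness 0%N.
have /choice[s s_step] : forall pj : X * nat, exists a,
    extendable pj.1 pj.2 -> extendable (set_coord pj.1 pj.2 a) pj.2.+1.
  move=> [p j] /=; have [/extendable_step[a]|not_ext] := pselect (extendable p j).
    by exists a.
  by exists (w0 0%N) => /not_ext.
pose fix approx j : X :=
  if j is j'.+1 then set_coord (approx j') j' (s (approx j', j')) else w0.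
have approx_ext j : extendable (approx j) j.
  elim: j => [n|j IHj]; last exact: (s_step (approx j, j)).
  by have [w Qw] := Q_witness n; exists w.
have approx_stable i k : (i < k)%N -> approx k i = approx i.+1 i.
  elim: k => [//|k IHk]; rewrite ltnS leq_eqVlt => /orP[/eqP ->//|lt_ik] /=.
  by rewrite /set_coord (ltn_eqF lt_ik) IHk.
exists (fun i => approx i.+1 i) => n.
have [w aw Qw] := approx_ext n n.
by apply: Q_agree Qw => i lt_in; rewrite -aw // approx_stable.
Qed.

End PrefixCompactness.
End Cylinders.

Section LocalHomeomorphism.
Variables (A : finType) (phi : shift_space A -> shift_space A).
Local Notation X := (shift_space A).
Hypothesis phi_lh : local_homeomorphism phi.

Lemma locally_injective x : exists n, forall y y',
  agree n x y -> agree n x y' -> phi y = phi y' -> y = y'.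
Proof.
have [U [Uo Ux _ [[_ phi_inj _] _]]] := phi_lh.2 x.
have [n xU] := (open_agreeP U).1 Uo x Ux.
by exists n => y y' xy xy' e; apply: phi_inj; rewrite ?inE; [apply: xU..|].
Qed.

Lemma local_lift x n : exists m, forall y, agree m (phi x) y ->
  exists2 x', agree n x x' & phi x' = y.
Proof.
have [U [Uo Ux phiUo [_ [g [gK [phiK [_ gc]]]]]]] := phi_lh.2 x.
have [n0 xU] := (open_agreeP U).1 Uo x Ux.
have phiUx : (phi @` U) (phi x) by exists x.
have [m1 gx] := (within_continuous_agreeP _ _).1 gc (phi x) phiUx (maxn n n0).
have [m2 xphiU] := (open_agreeP _).1 phiUo (phi x) phiUx.
exists (maxn m1 m2) => y xy.
have phiUy : (phi @` U) y by apply: xphiU; apply: agreeW xy; rewrite leq_maxr.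
exists (g y); last exact: phiK.
have := gx y phiUy (agreeW (leq_maxl _ _) xy).
by rewrite gK //; apply: agreeW; rewrite leq_maxl.
Qed.

Definition folds_near (w : X) n := exists y y',
  [/\ agree n w y, agree n w y', phi y = phi y' & y <> y'].

Lemma uniformly_injective : exists M, forall y y', phi y = phi y' -> agree M y y' -> y = y'.
Proof.
apply: contrapT => not_unif.
have [x fold_x] : exists x, forall n, folds_near x n.
  apply: prefix_compactness.
  - move=> n w w' ww' [y [y' [wy wy' e ne]]]; exists y, y'.
    by split=> //; apply: agree_trans (agree_sym ww') _.
  - move=> w m n le_mn [y [y' [wy wy' e ne]]]; exists y, y'.
    by split=> //; apply: agreeW le_mn _.
  move=> n; apply: contrapT => no_fold; apply: not_unif; exists n => y y' e yy'.
  apply: contrapT => ne; apply: no_fold; exists y, y, y'.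
  by split=> //; apply: agree_sym.
have [n x_inj] := locally_injective x.
have [y [y' [xy xy' e ne]]] := fold_x n.
exact/ne/x_inj.
Qed.

Section Fibres.
Variable M : nat.
Hypothesis phi_injM : forall y y', phi y = phi y' -> agree M y y' -> y = y'.

Definition prefix (x : X) : {ffun 'I_M -> A} := [ffun i : 'I_M => x i].

Definition fibre_prefixes (b : X) : {set {ffun 'I_M -> A}} :=
  [set v | `[< exists2 x, phi x = b & prefix x = v >]].

Lemma fibre_prefixesP v b : reflect (exists2 x, phi x = b & prefix x = v)
  (v \in fibre_prefixes b).
Proof. by rewrite inE; apply: asboolP. Qed.

Lemma prefix_fibre x : prefix x \in fibre_prefixes (phi x).
Proof. by apply/fibre_prefixesP; exists x. Qed.

Lemma prefix_eq x y : prefix x = prefix y <-> agree M x y.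
Proof.
split=> [/ffunP xy i lt_iM|xy]; last by apply/ffunP => i; rewrite !ffunE xy.
by have := xy (Ordinal lt_iM); rewrite !ffunE.
Qed.

Lemma card_fibre b : (phi @^-1` [set b] #= `I_#|fibre_prefixes b|)%card.
Proof.
set s := enum (fibre_prefixes b).
apply: (@card_eq_set_bij _ _ _ _ (fun x => index (prefix x) s)); split.
- by move=> x /= xb; rewrite cardE -/s index_mem mem_enum -xb prefix_fibre.
- move=> x y /set_mem /= xb /set_mem /= yb e.
  have sx : prefix x \in s by rewrite mem_enum -xb prefix_fibre.
  have sy : prefix y \in s by rewrite mem_enum -yb prefix_fibre.
  have /prefix_eq : prefix x = prefix y by rewrite -(nth_index (prefix x) sx) e nth_index.
  by apply: phi_injM; rewrite xb yb.
- move=> i /=; rewrite cardE -/s => lt_is.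
  have /fibre_prefixesP[x xb xi] : nth (prefix b) s i \in fibre_prefixes b.
    by rewrite -mem_enum mem_nth.
  by exists x => //; rewrite xi index_uniq ?enum_uniq.
Qed.

Definition lifts_near (b : X) m := forall x, phi x = b -> forall y, agree m b y ->
  exists2 x', agree M x x' & phi x' = y.

Lemma lifts_near_exists b : exists m, lifts_near b m.
Proof.
have /choice[m_ m_lift] : forall v : {ffun 'I_M -> A}, exists m, forall x, phi x = b ->
    prefix x = v -> forall y, agree m b y -> exists2 x', agree M x x' & phi x' = y.
  move=> v; have [[x0 x0b x0v]|no_x] := pselect (exists2 x, phi x = b & prefix x = v).
    have [m x0lift] := local_lift x0 M; exists m => x xb xv y b_y.
    have -> : x = x0 by apply: phi_injM; [rewrite xb|apply/prefix_eq; rewrite xv].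
    by apply: x0lift; rewrite x0b.
  by exists 0%N => x xb xv; case: no_x; exists x.
exists (\max_v m_ v) => x xb y b_y.
by apply: (m_lift (prefix x) x xb erefl); apply: agreeW b_y; apply: leq_bigmax.
Qed.

Lemma fibre_prefixes_agree b m b' : lifts_near b m -> agree m b b' ->
  fibre_prefixes b \subset fibre_prefixes b'.
Proof.
move=> b_lift bb'; apply/fintype.subsetP => v /fibre_prefixesP[x xb <-].
have [x' xx' <-] := b_lift x xb b' bb'.
by apply/fibre_prefixesP; exists x' => //; apply/prefix_eq/agree_sym.
Qed.

Hypothesis phi_star : star_commute phi (@shift_map A).

Lemma shift_map_fibre_bij b :
  set_bij (phi @^-1` [set b]) (phi @^-1` [set shift_map b]) (@shift_map A).
Proof.
have [comm uniq_lift] := phi_star; split.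
- by move=> x /= <-; rewrite comm.
- move=> x y /set_mem /= xb /set_mem /= yb e.
  have [z [_ z_uniq]] := uniq_lift (shift_map x) b ltac:(by rewrite comm xb).
  by rewrite -(z_uniq x (conj erefl xb)) (z_uniq y (conj (esym e) yb)).
- by move=> y /= yb; have [z [[<- zb] _]] := uniq_lift y b yb; exists z.
Qed.

Lemma card_fibre_prefixes_shift b :
  #|fibre_prefixes (shift_map b)| = #|fibre_prefixes b|.
Proof.
apply/esym/card_eq_II; apply: card_eq_trans (card_esym (card_fibre b)) _.
exact: card_eq_trans (card_eq_set_bij (shift_map_fibre_bij b)) (card_fibre _).
Qed.

(* Every b' is a shift of a point agreeing with b on a long prefix, and near b the
   number of fibre points can only grow. *)
Lemma card_fibre_prefixes_leq b b' : (#|fibre_prefixes b| <= #|fibre_prefixes b'|)%N.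
Proof.
have [m b_lift] := lifts_near_exists b.
pose c : X := fun i => if (i < m)%N then b i else b' (i - m)%N.
have -> : b' = iter m (@shift_map A) c.
  by rewrite iter_shift_map; apply: funext => i; rewrite /c ltnNge leq_addl addnK.
have -> : #|fibre_prefixes (iter m (@shift_map A) c)| = #|fibre_prefixes c|.
  by elim: (m) => //= n IHn; rewrite card_fibre_prefixes_shift.
by apply/subset_leq_card/(fibre_prefixes_agree b_lift) => i lt_im; rewrite /c lt_im.
Qed.

Lemma card_fibre_prefixes_const b b' : #|fibre_prefixes b| = #|fibre_prefixes b'|.
Proof. by apply/eqP; rewrite eqn_leq !card_fibre_prefixes_leq. Qed.

Lemma fibre_prefixes_neq0 b : (0 < #|fibre_prefixes b|)%N.
Proof.
rewrite (card_fibre_prefixes_const b (phi b)) card_gt0; apply/set0Pn.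
by exists (prefix b); apply: prefix_fibre.
Qed.

Lemma phi_surjective b : exists x, phi x = b.
Proof.
by have /card_gt0P[v /fibre_prefixesP[x xb _]] := fibre_prefixes_neq0 b; exists x.
Qed.

Section EvenCover.
Variables (b : X) (m : nat).
Hypothesis b_lift : lifts_near b m.

Definition sheet (x : {x : X | phi x = b}) : set X :=
  [set y | agree M (sval x) y /\ agree m b (phi y)].

Lemma open_sheet x : open (sheet x).
Proof.
apply/open_agreeP => y [xy b_y].
have [n yphi] := continuous_agree phi_lh.1 y m.
exists (maxn M n) => z yz; split.
  exact: agree_trans xy (agreeW (leq_maxl _ _) yz).
exact: agree_trans b_y (yphi _ (agreeW (leq_maxr _ _) yz)).
Qed.

Lemma sheets_disjoint x x' : x <> x' -> sheet x `&` sheet x' = set0.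
Proof.
case: x x' => [x xb] [x' x'b] ne; rewrite -subset0 => y [[xy _] [x'y _]]; apply: ne.
have e : x = x' by apply: phi_injM; [rewrite xb x'b|apply: agree_trans xy (agree_sym x'y)].
by subst x'; rewrite (Prop_irrelevance xb x'b).
Qed.

(* A point over the cylinder around b has its prefix among those of the fibre over b,
   because both fibres have the same number of prefixes and the one over b is smaller. *)
Lemma preimage_cylinder_sheets :
  phi @^-1` agree m b = \bigcup_(x in [set: {x : X | phi x = b}]) sheet x.
Proof.
apply/seteqP; split=> [y /= b_y|y [x _ []//]].
have : prefix y \in fibre_prefixes b.
  have /eqP -> : fibre_prefixes b == fibre_prefixes (phi y).
    rewrite eqEcard (fibre_prefixes_agree b_lift b_y).
    by rewrite (card_fibre_prefixes_const (phi y) b) leqnn.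
  exact: prefix_fibre.
by case/fibre_prefixesP => x xb xy; exists (exist _ x xb) => //; split=> //; apply/prefix_eq.
Qed.

Lemma homeo_on_sheet x : homeo_on phi (sheet x) (agree m b).
Proof.
have phi_inj : set_inj (sheet x) phi.
  move=> y y' /set_mem[xy _] /set_mem[xy' _] e.
  by apply: phi_injM => //; apply: agree_trans (agree_sym xy) xy'.
have /choice[g g_lift] : forall y, exists x',
    agree m b y -> sheet x x' /\ phi x' = y.
  move=> y; have [b_y|not_by] := pselect (agree m b y); last by exists (sval x) => /not_by.
  have [x' xx' <-] := b_lift (svalP x) b_y.
  by exists x'.
split; first split.
- by move=> y [].
- exact: phi_inj.
- by move=> y b_y; have [? ?] := g_lift y b_y; exists (g y).
exists g; split=> [y xy|].
  by have [? ?] := g_lift _ xy.2; apply: phi_inj; rewrite ?inE.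
split=> [y b_y|]; first by case: (g_lift y b_y).
split; first exact: continuous_subspaceT phi_lh.1.
apply/within_continuous_agreeP => y b_y n.
have [[xgy _] gyy] := g_lift y b_y.
have [n' gy_lift] := local_lift (g y) (maxn n M).
exists n' => y' b_y' yy'.
have [z gyz zy'] := gy_lift y' ltac:(by rewrite gyy).
have [[xgy' _] gy'y'] := g_lift y' b_y'.
have -> : g y' = z.
  apply: phi_injM; first by rewrite gy'y' zy'.
  apply: agree_trans (agree_sym xgy') _.
  exact: agree_trans xgy (agreeW (leq_maxr _ _) gyz).
exact: agreeW (leq_maxl _ _) gyz.
Qed.

Lemma evenly_covered_cylinder : evenly_covered phi (agree m b).
Proof.
split; first by apply/open_agreeP => y b_y; exists m => z yz; apply: agree_trans yz.
exists {x : X | phi x = b}, sheet; split.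
- exact: open_sheet.
- exact: sheets_disjoint.
- exact: preimage_cylinder_sheets.
- exact: homeo_on_sheet.
Qed.

End EvenCover.

Lemma phi_covering : covering_map phi.
Proof.
split; [exact: phi_lh.1|exact: phi_surjective|move=> b].
have [m b_lift] := lifts_near_exists b.
by exists (agree m b); split; [|exact: evenly_covered_cylinder].
Qed.

End Fibres.
End LocalHomeomorphism.

Theorem proposition5p13 (A : finType) (phi : shift_space A -> shift_space A) :
  sliding_block_code phi ->
  local_homeomorphism phi ->
  star_commute phi (@shift_map A) ->
  exists k : nat, (0 < k)%N /\ k_fold_covering phi k.
Proof.
move=> _ phi_lh phi_star.
have [M phi_injM] := uniformly_injective phi_lh.
have [[x0 _]|no_point] := pselect (exists x : shift_space A, True).
  exists #|fibre_prefixes phi M x0|; split.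
    exact: (fibre_prefixes_neq0 phi_lh phi_injM phi_star x0).
  split; first exact: (phi_covering phi_lh phi_injM phi_star).
  move=> b; rewrite (card_fibre_prefixes_const phi_lh phi_injM phi_star x0 b).
  exact: (card_fibre phi_injM b).
have empty (b : shift_space A) : False by apply: no_point; exists b.
exists 1%N; split; first by [].
split; last by move=> b; case: (empty b).
by split; [exact: phi_lh.1|move=> b; case: (empty b)..].
Qed.
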